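(* Let $\Sigma$ be a set of prime numbers, $S$ the multiplicative submonoid of $\mathbb{N}$ generated by $\Sigma$, $\mathbb{Z}[S^{-1}]\subset\mathbb{Q}$ the localization. Let $M$ be a locally compact topological $\mathbb{Z}[S^{-1}]$-module whose underlying group is $(M,+)=\mathbb{R}^n\times H$ for some $n\ge0$ and some locally compact abelian group $H$ containing a compact open subgroup. Then $\mathbb{R}^n\times 0$ is a (closed) $\mathbb{Z}[S^{-1}]$-submodule of $M$; in particular $H$ is also a $\mathbb{Z}[S^{-1}]$-module, as a quotient of $M$.
   Context: All topological groups are Hausdorff; $\mathbb{Z}[S^{-1}]$ is discrete and a locally compact topological $\mathbb{Z}[S^{-1}]$-module is a locally compact abelian group with a $\mathbb{Z}[S^{-1}]$-module structure with continuous scalar multiplication. *)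

From HB Require Import structures.
From mathcomp Require Import all_boot all_order all_algebra.
From mathcomp Require Import all_classical all_reals all_analysis.
Set Implicit Arguments. Unset Strict Implicit. Unset Printing Implicit Defensive.
Import Order.TTheory GRing.Theory Num.Theory.
Import numFieldNormedType.Exports.
Local Open Scope classical_set_scope.
Local Open Scope ring_scope.

(* S = multiplicative submonoid of nat generated by the set of primes Sigma:
   the positive integers all of whose prime divisors lie in Sigma. *)
Definition in_monoid_gen (Sigma : set nat) (s : nat) : Prop :=
  (0 < s)%N /\ forall p : nat, prime p -> (p %| s)%N -> Sigma p.

Definition in_ZSinv (Sigma : set nat) (q : rat) : Prop :=
  exists s : nat, in_monoid_gen Sigma s /\ (s%:Q * q) \is a Num.int.

(* A topological Z[S^-1]-module structure on the topological abelian group M,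
   given by the scalar action act : Q -> M -> M (only its values on Z[S^-1]
   matter).  Since Z[S^-1] is discrete, continuity of scalar multiplication
   Z[S^-1] x M -> M is continuity of each map x |-> act q x. *)
Definition is_top_ZSinv_module (Sigma : set nat) (M : topologicalType)
  (add : M -> M -> M) (act : rat -> M -> M) : Prop :=
  [/\ forall x, act 1 x = x,
      forall a b x, in_ZSinv Sigma a -> in_ZSinv Sigma b ->
        act (a + b) x = add (act a x) (act b x),
      forall a b x, in_ZSinv Sigma a -> in_ZSinv Sigma b ->
        act (a * b) x = act a (act b x),
      forall a x y, in_ZSinv Sigma a -> act a (add x y) = add (act a x) (act a y)
    & forall a, in_ZSinv Sigma a -> continuous (act a)].

Definition has_compact_open_subgroup (H : topologicalZmodType) : Prop :=
  exists K : set H, [/\ compact K, open K, K 0 &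
    forall x y, K x -> K y -> K (x - y)].

From HB Require Import structures.
From mathcomp Require Import all_boot all_order all_algebra.
From mathcomp Require Import all_classical all_reals all_analysis.
Import Order.TTheory GRing.Theory Num.Theory.
Import numFieldNormedType.Exports.
Local Open Scope classical_set_scope.
Local Open Scope ring_scope.

(* The statement is algebraic.  Write q = m / s with s in S.  Then
   s (q (v, 0)) = m (v, 0) lies in R^n x 0, so the H-component h of q (v, 0)
   satisfies s (0, h) = 0; as s acts invertibly on a Z[S^-1]-module,
   (0, h) = 0. *)

Lemma in_monoid_gen1 (Sigma : set nat) : in_monoid_gen Sigma 1.
Proof. by split=> // p p_pr; rewrite dvdn1 => /eqP p1; rewrite p1 in p_pr. Qed.

Lemma in_ZSinv_int (Sigma : set nat) (m : int) : in_ZSinv Sigma m%:~R.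
Proof. by exists 1%N; split; [exact: in_monoid_gen1 | rewrite mul1r intr_int]. Qed.

Lemma in_ZSinv_nat (Sigma : set nat) (k : nat) : in_ZSinv Sigma k%:R.
Proof. exact: (in_ZSinv_int Sigma k). Qed.

Lemma in_ZSinv_invn (Sigma : set nat) (s : nat) :
  in_monoid_gen Sigma s -> in_ZSinv Sigma s%:R^-1.
Proof.
move=> Ss; exists s; split=> //.
by rewrite mulfV ?intr_int // pnatr_eq0 -lt0n; case: Ss.
Qed.

Lemma closed_snd_eq (T U : topologicalType) (u : U) :
  accessible_space U -> closed [set x : T * U | x.2 = u].
Proof.
move=> U_T1; apply: (@preimage_closed _ _ snd [set u]).
- by move=> x _; exact: cvg_snd.
- exact: accessible_closed_set1.
Qed.

Section ZSinvAction.
Variables (Sigma : set nat) (V : zmodType) (act : rat -> V -> V).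
Hypothesis act1 : forall x, act 1 x = x.
Hypothesis actDl : forall a b x, in_ZSinv Sigma a -> in_ZSinv Sigma b ->
  act (a + b) x = act a x + act b x.
Hypothesis actA : forall a b x, in_ZSinv Sigma a -> in_ZSinv Sigma b ->
  act (a * b) x = act a (act b x).
Hypothesis actDr : forall a x y, in_ZSinv Sigma a ->
  act a (x + y) = act a x + act a y.

Lemma addr_idempotent_eq0 (x : V) : x = x + x -> x = 0.
Proof. by move/eqP; rewrite -subr_eq0 opprD addrA subrr sub0r oppr_eq0 => /eqP. Qed.

Lemma act0r x : act 0 x = 0.
Proof.
apply: addr_idempotent_eq0.
by rewrite -actDl ?addr0 //; exact: (in_ZSinv_nat Sigma 0).
Qed.

Lemma actr0 a : in_ZSinv Sigma a -> act a 0 = 0.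
Proof. by move=> Za; apply: addr_idempotent_eq0; rewrite -actDr ?addr0. Qed.

Lemma act_natr (k : nat) x : act k%:R x = x *+ k.
Proof.
elim: k => [|k IHk]; first exact: act0r.
rewrite mulrSr actDl ?IHk ?act1 ?mulrSr //; first exact: in_ZSinv_nat.
exact: (in_ZSinv_nat Sigma 1).
Qed.

Lemma act_intr (m : int) x : act m%:~R x = x *~ m.
Proof.
case: m => k; first exact: act_natr.
apply/eqP; rewrite NegzE mulrNz -addr_eq0 -act_natr -actDl.
- by rewrite addNr act0r.
- by rewrite -mulrNz; exact: in_ZSinv_int.
- exact: in_ZSinv_nat.
Qed.

Lemma act_mulrn_denom (q : rat) (s : nat) (m : int) x :
  s%:R * q = m%:~R -> in_ZSinv Sigma q -> act q x *+ s = x *~ m.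
Proof.
move=> sqE Zq; rewrite -act_natr -actA //; last exact: in_ZSinv_nat.
by rewrite sqE act_intr.
Qed.

Lemma mulrn_eq0_monoid_gen (s : nat) (x : V) :
  in_monoid_gen Sigma s -> x *+ s = 0 -> x = 0.
Proof.
move=> Ss sx0; have Zsinv := @in_ZSinv_invn Sigma s Ss.
rewrite -[x]act1 -(@mulVf _ (s%:R : rat)); last by rewrite pnatr_eq0 -lt0n; case: Ss.
rewrite actA //; last exact: in_ZSinv_nat.
by rewrite act_natr sx0 actr0.
Qed.

End ZSinvAction.

Section ProductAction.
Variables (Sigma : set nat) (A B : zmodType) (act : rat -> A * B -> A * B).
Hypothesis act1 : forall x, act 1 x = x.
Hypothesis actDl : forall a b x, in_ZSinv Sigma a -> in_ZSinv Sigma b ->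
  act (a + b) x = act a x + act b x.
Hypothesis actA : forall a b x, in_ZSinv Sigma a -> in_ZSinv Sigma b ->
  act (a * b) x = act a (act b x).
Hypothesis actDr : forall a x y, in_ZSinv Sigma a ->
  act a (x + y) = act a x + act a y.

Lemma act_snd_eq0 q (v : A) : in_ZSinv Sigma q -> (act q (v, 0)).2 = 0.
Proof.
move=> Zq; case: (Zq) => s [Ss /intrP [m sqE]].
set h := (act q (v, 0)).2.
have sh0 : h *+ s = 0.
  rewrite -(raddfMn snd) (@act_mulrn_denom Sigma _ act act1 actDl actA _ s m) //.
  by rewrite (raddfMz snd) mul0rz.
have : ((0 : A), h) *+ s = 0.
  by rewrite [LHS]surjective_pairing (raddfMn fst) (raddfMn snd) mul0rn sh0.
by move/(@mulrn_eq0_monoid_gen Sigma _ act act1 actDl actA actDr _ _ Ss) => [].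
Qed.

End ProductAction.

Theorem mainTheorem19 (R : realType) (Sigma : set nat)
  (hSigma : forall p, Sigma p -> prime p)
  (n : nat) (H : topologicalZmodType)
  (hH_haus : hausdorff_space H)
  (hH_lc : locally_compact [set: H])
  (hH_cos : has_compact_open_subgroup H)
  (act : rat -> 'rV[R]_n * H -> 'rV[R]_n * H)
  (hact : @is_top_ZSinv_module Sigma ('rV[R]_n * H)%type +%R act) :
  closed [set x : 'rV[R]_n * H | x.2 = 0] /\
  (forall q (v : 'rV[R]_n), in_ZSinv Sigma q -> (act q (v, 0)).2 = 0).
Proof.
split; first exact/closed_snd_eq/hausdorff_accessible.
case: hact => act1 actDl actA actDr _.
exact: act_snd_eq0.
Qed.
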